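(* Let $M=(r,q,u)$ be a floor-randomized mechanism. Then there exists a floor-randomized mechanism $\tilde M=(\tilde r,\tilde q,\tilde u)$ satisfying DD such that $\tilde q(\theta)\le q(\theta)$ for all $\theta>\underline\theta$, $\tilde u(\theta)\le u(\theta)$ for all $\theta$, and $\mathrm{RS}_\alpha(\theta,\tilde M)\ge\mathrm{RS}_\alpha(\theta,M)$ for all $\theta$. Moreover, for every $\theta$ with $q(\theta)>q_e(\theta)$ (with $\theta>\underline\theta$ for the first inequality) the inequalities $\tilde q(\theta)<q(\theta)$ and $\mathrm{RS}_\alpha(\theta,\tilde M)>\mathrm{RS}_\alpha(\theta,M)$ are strict, and if $q(\underline\theta)\neq q_e(\underline\theta)$ then $\mathrm{RS}_\alpha(\underline\theta,\tilde M)>\mathrm{RS}_\alpha(\underline\theta,M)$.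
   Context: Setting. Let $\Theta=[\underline\theta,\overline\theta]$ with $0<\underline\theta<\overline\theta$. Let $c>0$ and let $P:\mathbb R_+\to\mathbb R_+$ be continuous and strictly decreasing with $P(\overline q)=0$ for some $\overline q>0$. Put $V(q)=\int_0^q P(z)\,dz$ and $\mathrm{TS}(\theta,q)=V(q)-c-\theta q$ for $q>0$, $\mathrm{TS}(\theta,0)=0$. Assume (A2): $\mathrm{TS}(\overline\theta,P^{-1}(\overline\theta))>0$. A mechanism is a triple $M=(r,q,u)$ of functions $r:\Theta\to[0,1]$, $q:\Theta\to[0,\overline q]$, $u:\Theta\to\mathbb R$ with $q(\theta)=0$ if and only if $r(\theta)=0$. It is IC if $u(\theta)\ge u(\theta')+(\theta'-\theta)q(\theta')r(\theta')$ for all $\theta,\theta'\in\Theta$, and IR if $u(\theta)\ge 0$ for all $\theta$. (Known fact: $M$ is IC iff $\theta\mapsto q(\theta)r(\theta)$ is nonincreasing and $u(\theta)=u(\overline\theta)+\int_\theta^{\overline\theta}q(z)r(z)\,dz$ for all $\theta$; an IC mechanism is IR iff $u(\overline\theta)\ge0$.) Fix $\alpha\in[0,1)$. The regulator's surplus at $\theta$ is $\mathrm{RS}_\alpha(\theta,M)=r(\theta)\,\mathrm{TS}(\theta,q(\theta))-(1-\alpha)u(\theta)$. The quantity floor $\hat q$ is the unique $q>0$ with $V(q)-qP(q)=c$. A mechanism $(r,q,u)$ is floor-randomized if it is IC, IR, $u(\overline\theta)=0$, and $\Theta$ can be partitioned into three pairwise disjoint (possibly empty) intervals $\Theta_1,\Theta_{01},\Theta_0$,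 with every element of $\Theta_0$ larger than every element of $\Theta_{01}$ and every element of $\Theta_{01}$ larger than every element of $\Theta_1$, such that: $q(\theta)\ge\hat q$ and $r(\theta)=1$ for $\theta\in\Theta_1$; $q(\theta)=\hat q$ and $r(\theta)\in(0,1)$ for $\theta\in\Theta_{01}$; $q(\theta)=r(\theta)=0$ for $\theta\in\Theta_0$. The efficient quantity is $q_e(\theta)=P^{-1}(\theta)$. A mechanism satisfies downward distortion (DD) if $q(\theta)\le q_e(\theta)$ for all $\theta$, with equality at $\theta=\underline\theta$. *)

From Stdlib Require Import Reals Lra.
From Coquelicot Require Import Coquelicot.
Open Scope R_scope.

Definition inTheta (thl thh th : R) : Prop := thl <= th <= thh.

Definition V (P : R -> R) (q : R) : R := RInt P 0 q.

Definition TS (P : R -> R) (c th q : R) : R :=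
  if Rlt_dec 0 q then V P q - c - th * q else 0.

Definition cont_on_Rplus (P : R -> R) : Prop :=
  forall x, 0 <= x ->
    filterlim P (within (fun y => 0 <= y) (locally x)) (locally (P x)).

Definition mechanism (thl thh qbar : R) (r q u : R -> R) : Prop :=
  forall th, inTheta thl thh th ->
    0 <= r th <= 1 /\ 0 <= q th <= qbar /\ (q th = 0 <-> r th = 0).

Definition IC (thl thh : R) (r q u : R -> R) : Prop :=
  forall th th', inTheta thl thh th -> inTheta thl thh th' ->
    u th >= u th' + (th' - th) * q th' * r th'.

Definition IR (thl thh : R) (u : R -> R) : Prop :=
  forall th, inTheta thl thh th -> u th >= 0.

Definition RS (P : R -> R) (c alpha : R) (r q u : R -> R) (th : R) : R :=
  r th * TS P c th (q th) - (1 - alpha) * u th.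

Definition is_interval (S : R -> Prop) : Prop :=
  forall x y z, S x -> S z -> x <= y <= z -> S y.

Definition floor_randomized (thl thh qbar qhat : R) (r q u : R -> R) : Prop :=
  mechanism thl thh qbar r q u /\ IC thl thh r q u /\ IR thl thh u /\
  u thh = 0 /\
  exists S1 S01 S0 : R -> Prop,
    is_interval S1 /\ is_interval S01 /\ is_interval S0 /\
    (forall th, S1 th -> inTheta thl thh th) /\
    (forall th, S01 th -> inTheta thl thh th) /\
    (forall th, S0 th -> inTheta thl thh th) /\
    (forall th, inTheta thl thh th -> S1 th \/ S01 th \/ S0 th) /\
    (forall th, ~ (S1 th /\ S01 th)) /\
    (forall th, ~ (S1 th /\ S0 th)) /\
    (forall th, ~ (S01 th /\ S0 th)) /\
    (forall x y, S0 x -> S01 y -> y < x) /\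
    (forall x y, S01 x -> S1 y -> y < x) /\
    (forall th, S1 th -> q th >= qhat /\ r th = 1) /\
    (forall th, S01 th -> q th = qhat /\ 0 < r th < 1) /\
    (forall th, S0 th -> q th = 0 /\ r th = 0).

(* downward distortion, qe = efficient quantity P^{-1} *)
Definition DD (thl thh : R) (qe : R -> R) (q : R -> R) : Prop :=
  (forall th, inTheta thl thh th -> q th <= qe th) /\ q thl = qe thl.

From Pilot Require Import Defs.
From Stdlib Require Import Reals Lra List.
From Coquelicot Require Import Coquelicot.
Open Scope R_scope.

(* Cap every quantity at the efficient level, [min (q, qe)], and serve the lowest
   type efficiently for sure.  Quantities above [qe] occur only where [r = 1], since
   the floor [qhat] lies below [qe]; there the cap strictly raises
   [TS th q = V q - c - th q], which is strictly maximised at [qe th = P^-1 th].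
   The capped allocation [x = qt rt] is still nonincreasing, so it is implemented by
   the least rent [ut th = int_th^thh x], which lies below [u] because IC forces
   [u th >= int_th^thh q r >= int_th^thh x].  The partition survives with the lowest
   type moved into the top-quantity interval. *)

Lemma cont_on_Rplus_clamp (P : R -> R) :
  cont_on_Rplus P -> forall x, continuous (fun y => P (Rmax 0 y)) x.
Proof.
intros HP x Q [eps Heps].
destruct (HP (Rmax 0 x) (Rmax_l _ _) Q) as [d Hd]; [exists eps; exact Heps|].
exists d. intros y Hy.
apply Hd; [|apply Rmax_l].
unfold ball in *; simpl in *; unfold AbsRing_ball, abs, minus, plus, opp in *; simpl in *.
apply Rle_lt_trans with (2 := Hy).
unfold Rmax; destruct (Rle_dec 0 y), (Rle_dec 0 x);
  unfold Rabs; repeat destruct Rcase_abs; lra.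
Qed.

Lemma cont_on_Rplus_ex_RInt (P : R -> R) a b :
  cont_on_Rplus P -> 0 <= a -> 0 <= b -> ex_RInt P a b.
Proof.
intros HP Ha Hb.
apply ex_RInt_ext with (f := fun y => P (Rmax 0 y)).
- intros y Hy. rewrite Rmax_right; [reflexivity|].
  assert (0 <= Rmin a b) by (unfold Rmin; destruct Rle_dec; lra). lra.
- apply (@ex_RInt_continuous R_CompleteNormedModule).
  intros; apply cont_on_Rplus_clamp; assumption.
Qed.

Section DecreasingDemand.

Variables (P : R -> R) (qbar : R).
Hypothesis P_cont : cont_on_Rplus P.
Hypothesis P_decr : forall x y, 0 <= x -> x < y -> y <= qbar -> P y < P x.

Lemma V_sub a b : 0 <= a -> 0 <= b -> V P b - V P a = RInt P a b.
Proof.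
intros Ha Hb. unfold V.
rewrite <- (RInt_Chasles P 0 a b); [unfold plus; simpl; ring| |];
  apply cont_on_Rplus_ex_RInt; auto; lra.
Qed.

Lemma RInt_decr_bounds a b : 0 <= a -> a <= b -> b <= qbar ->
  (b - a) * P b <= RInt P a b <= (b - a) * P a.
Proof.
intros Ha Hab Hb.
assert (HP : ex_RInt P a b) by (apply cont_on_Rplus_ex_RInt; auto; lra).
assert (Hconst : forall k, RInt (fun _ => k) a b = (b - a) * k).
{ intros k. rewrite RInt_const. reflexivity. }
rewrite <- !Hconst.
split; apply RInt_le; auto using ex_RInt_const;
  intros y Hy; left; apply P_decr; lra.
Qed.

(* Splitting at the midpoint makes both bounds strict without any continuity of P at 0. *)
Lemma V_sub_strict_bounds a b : 0 <= a -> a < b -> b <= qbar ->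
  (b - a) * P b < V P b - V P a < (b - a) * P a.
Proof.
intros Ha Hab Hb.
set (m := (a + b) / 2).
replace (V P b - V P a) with ((V P m - V P a) + (V P b - V P m)) by ring.
rewrite !V_sub by (unfold m; lra).
destruct (RInt_decr_bounds a m) as [A1 A2]; try (unfold m; lra).
destruct (RInt_decr_bounds m b) as [B1 B2]; try (unfold m; lra).
assert (P m < P a) by (apply P_decr; unfold m; lra).
assert (P b < P m) by (apply P_decr; unfold m; lra).
unfold m in *; split; nra.
Qed.

Lemma TS_lt_TS_at_price th c e x : 0 < e <= qbar -> P e = th ->
  0 < x <= qbar -> x <> e -> TS P c th x < TS P c th e.
Proof.
intros He HPe Hx Hne. unfold TS.
destruct (Rlt_dec 0 x); [|lra]. destruct (Rlt_dec 0 e); [|lra].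
destruct (Rtotal_order x e) as [Hlt|[Heq|Hgt]]; [|contradiction|].
- destruct (V_sub_strict_bounds x e) as [H _]; try lra. subst th. nra.
- destruct (V_sub_strict_bounds e x) as [_ H]; try lra. subst th. nra.
Qed.

End DecreasingDemand.

Section Rent.

Variables (thl thh : R) (x : R -> R).

Fixpoint chain (a : R) (l : list R) : Prop :=
  match l with
  | nil => True
  | p :: l' => a <= p /\ inTheta thl thh p /\ chain p l'
  end.

Fixpoint right_sum (a : R) (l : list R) : R :=
  match l with
  | nil => 0
  | p :: l' => (p - a) * x p + right_sum p l'
  end.

Definition right_sums (a v : R) : Prop := exists l, chain a l /\ v = right_sum a l.

(* For nonincreasing [x], right-endpoint sums are lower Darboux sums, so [rent a]
   is the integral of [x] over [a, thh]. *)
Definition rent (a : R) : R := real (Lub_Rbar (right_sums a)).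

Hypothesis x_ge0 : forall p, inTheta thl thh p -> 0 <= x p.
Hypothesis x_nonincr : forall p p', inTheta thl thh p -> inTheta thl thh p' ->
  p <= p' -> x p' <= x p.

Lemma right_sum_le a l : chain a l -> right_sum a l <= Rmax 0 ((thh - a) * x thl).
Proof.
revert a. induction l as [|p l IH]; intros a Hc; simpl; [apply Rmax_l|].
destruct Hc as [Hap [Hp Hc]].
assert (Hl : inTheta thl thh thl) by (unfold inTheta in *; lra).
pose proof (x_ge0 thl Hl). pose proof (x_nonincr thl p Hl Hp (proj1 Hp)).
specialize (IH p Hc). unfold inTheta in Hp.
rewrite Rmax_right in IH by nra. rewrite Rmax_right by nra. nra.
Qed.

Lemma rent_is_lub a : is_lub (right_sums a) (rent a).
Proof.
assert (H0 : right_sums a 0) by (exists nil; simpl; auto).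
destruct (completeness (right_sums a)) as [m Hm].
- exists (Rmax 0 ((thh - a) * x thl)). intros v [l [Hc ->]]. apply right_sum_le, Hc.
- exists 0; exact H0.
- unfold rent. rewrite (is_lub_Rbar_unique _ (Finite m)); [exact Hm|].
  split; [intros v Hv; apply (proj1 Hm), Hv|].
  intros [b| |] Hb; simpl; auto.
  + apply (proj2 Hm). intros v Hv. exact (Hb v Hv).
  + exact (Hb 0 H0).
Qed.

Lemma right_sum_le_rent a l : chain a l -> right_sum a l <= rent a.
Proof. intros Hc. apply (proj1 (rent_is_lub a)). exists l; auto. Qed.

Lemma rent_le_ub a m : (forall l, chain a l -> right_sum a l <= m) -> rent a <= m.
Proof. intros Hm. apply (proj2 (rent_is_lub a)). intros v [l [Hc ->]]. auto. Qed.

Lemma rent_ge0 a : 0 <= rent a.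
Proof. apply (right_sum_le_rent a nil). simpl; auto. Qed.

Lemma rent_top : rent thh = 0.
Proof.
apply Rle_antisym; [|apply rent_ge0].
apply rent_le_ub.
assert (H : forall l a, a = thh -> chain a l -> right_sum a l <= 0).
{ induction l as [|p l IH]; intros a Ha Hc; simpl; [lra|].
  destruct Hc as [Hap [Hp Hc]]. unfold inTheta in Hp.
  assert (Ep : p = thh) by lra.
  specialize (IH p Ep Hc). replace (p - a) with 0 by lra. lra. }
intros l; apply H; reflexivity.
Qed.

Lemma right_sum_le_shift a : forall l b, chain b l -> inTheta thl thh b -> b <= a ->
  right_sum b l <= (a - b) * x b + rent a.
Proof.
induction l as [|p l IH]; intros b Hc Hb Hba; simpl.
- pose proof (x_ge0 b Hb). pose proof (rent_ge0 a). nra.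
- destruct Hc as [Hbp [Hp Hc]].
  pose proof (x_nonincr b p Hb Hp Hbp).
  destruct (Rle_lt_dec p a) as [Hpa|Hap].
  + specialize (IH p Hc Hp Hpa). nra.
  + assert (Hs : right_sum a (p :: l) <= rent a)
      by (apply right_sum_le_rent; simpl; split; [lra|auto]).
    simpl in Hs. pose proof (x_ge0 p Hp). nra.
Qed.

Lemma rent_IC a b : inTheta thl thh a -> inTheta thl thh b ->
  rent a >= rent b + (b - a) * x b.
Proof.
intros Ha Hb. destruct (Rle_lt_dec a b) as [Hab|Hba].
- enough (rent b <= rent a - (b - a) * x b) by lra.
  apply rent_le_ub. intros l Hc.
  assert (Hs : right_sum a (b :: l) <= rent a)
    by (apply right_sum_le_rent; simpl; auto).
  simpl in Hs. lra.
- enough (rent b <= rent a + (a - b) * x b) by lra.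
  apply rent_le_ub. intros l Hc.
  pose proof (right_sum_le_shift a l b Hc Hb (Rlt_le _ _ Hba)). lra.
Qed.

Lemma rent_minimal (w : R -> R) :
  (forall a, inTheta thl thh a -> w a >= 0) ->
  (forall a p, inTheta thl thh a -> inTheta thl thh p -> a < p ->
     w a >= w p + (p - a) * x p) ->
  forall a, inTheta thl thh a -> rent a <= w a.
Proof.
intros Hw0 Hw a Ha. apply rent_le_ub. intros l. revert a Ha.
induction l as [|p l IH]; intros a Ha Hc; simpl.
- specialize (Hw0 a Ha). lra.
- destruct Hc as [Hap [Hp Hc]]. specialize (IH p Hp Hc).
  destruct (Req_dec a p) as [->|Hne]; [lra|].
  specialize (Hw a p Ha Hp ltac:(lra)). lra.
Qed.

End Rent.

Definition ordered_partition (thl thh : R) (S1 S01 S0 : R -> Prop) : Prop :=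
  is_interval S1 /\ is_interval S01 /\ is_interval S0 /\
  (forall th, S1 th -> inTheta thl thh th) /\
  (forall th, S01 th -> inTheta thl thh th) /\
  (forall th, S0 th -> inTheta thl thh th) /\
  (forall th, inTheta thl thh th -> S1 th \/ S01 th \/ S0 th) /\
  (forall th, ~ (S1 th /\ S01 th)) /\
  (forall th, ~ (S1 th /\ S0 th)) /\
  (forall th, ~ (S01 th /\ S0 th)) /\
  (forall x y, S0 x -> S01 y -> y < x) /\
  (forall x y, S01 x -> S1 y -> y < x).

Definition floor_values (qhat : R) (r q : R -> R) (S1 S01 S0 : R -> Prop) : Prop :=
  (forall th, S1 th -> q th >= qhat /\ r th = 1) /\
  (forall th, S01 th -> q th = qhat /\ 0 < r th < 1) /\
  (forall th, S0 th -> q th = 0 /\ r th = 0).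

Lemma floor_randomized_iff thl thh qbar qhat r q u :
  floor_randomized thl thh qbar qhat r q u <->
  mechanism thl thh qbar r q u /\ IC thl thh r q u /\ Defs.IR thl thh u /\ u thh = 0 /\
  exists S1 S01 S0, ordered_partition thl thh S1 S01 S0 /\ floor_values qhat r q S1 S01 S0.
Proof.
unfold floor_randomized, ordered_partition, floor_values.
split.
- intros (Hm & Hic & Hir & Hu & S1 & S01 & S0 & H1 & H2 & H3 & H4 & H5 & H6 & H7 & H8 & H9
    & H10 & H11 & H12 & V1 & V01 & V0).
  do 4 (split; [assumption|]). exists S1, S01, S0. tauto.
- intros (Hm & Hic & Hir & Hu & S1 & S01 & S0 & (H1 & H2 & H3 & H4 & H5 & H6 & H7 & H8 & H9
    & H10 & H11 & H12) & V1 & V01 & V0).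
  do 4 (split; [assumption|]). exists S1, S01, S0. tauto.
Qed.

Lemma IC_flow_nonincr thl thh r q u : IC thl thh r q u ->
  forall a b, inTheta thl thh a -> inTheta thl thh b -> a <= b -> q b * r b <= q a * r a.
Proof.
intros HIC a b Ha Hb Hab. destruct (Req_dec a b) as [->|E]; [lra|].
pose proof (HIC a b Ha Hb). pose proof (HIC b a Hb Ha). nra.
Qed.

Lemma floor_S1_below_S0 thl thh qhat r q u S1 S01 S0 : 0 < qhat ->
  IC thl thh r q u -> ordered_partition thl thh S1 S01 S0 ->
  floor_values qhat r q S1 S01 S0 -> forall x y, S0 x -> S1 y -> y < x.
Proof.
intros Hqhat HIC (_ & _ & _ & D1 & _ & D0 & _) (V1 & _ & V0) x y Hx Hy.
destruct (Rle_lt_dec x y) as [Hxy|Hxy]; [|exact Hxy].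
pose proof (IC_flow_nonincr thl thh r q u HIC x y (D0 x Hx) (D1 y Hy) Hxy).
destruct (V0 x Hx), (V1 y Hy). nra.
Qed.

Definition with_bottom (thl thh : R) (S : R -> Prop) (th : R) : Prop :=
  inTheta thl thh th /\ (th = thl \/ S th).

Definition without_bottom (thl : R) (S : R -> Prop) (th : R) : Prop := S th /\ th <> thl.

Lemma ordered_partition_move_bottom thl thh S1 S01 S0 :
  ordered_partition thl thh S1 S01 S0 ->
  (forall x y, S0 x -> S1 y -> y < x) ->
  ordered_partition thl thh
    (with_bottom thl thh S1) (without_bottom thl S01) (without_bottom thl S0).
Proof.
intros (I1 & I01 & I0 & D1 & D01 & D0 & Cov & N1 & N2 & N3 & O2 & O1) O3.
unfold ordered_partition, with_bottom, without_bottom.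
repeat match goal with |- _ /\ _ => split end.
- intros x y z [Hx _] [Hz [Ez|Ez]] Hxyz; unfold inTheta in *;
    (assert (Hy : inTheta thl thh y) by (unfold inTheta; lra)); split; auto.
  + left; lra.
  + destruct (Req_dec y thl) as [Ey|Ey]; [left; exact Ey|right].
    destruct (Cov y Hy) as [h|[h|h]]; auto.
    * specialize (O1 y z h Ez). lra.
    * specialize (O3 y z h Ez). lra.
- intros x y z [Hx Ex] [Hz _] Hxyz. split; [apply (I01 x y z); auto|].
  pose proof (D01 x Hx). unfold inTheta in *. lra.
- intros x y z [Hx Ex] [Hz _] Hxyz. split; [apply (I0 x y z); auto|].
  pose proof (D0 x Hx). unfold inTheta in *. lra.
- intros th [h _]; exact h.
- intros th [h _]; exact (D01 th h).
- intros th [h _]; exact (D0 th h).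
- intros th Hth. destruct (Req_dec th thl) as [E|E]; [left; auto|].
  destruct (Cov th Hth) as [h|[h|h]]; auto.
- intros th [[_ [h|h]] [h' h'']]; [contradiction|exact (N1 th (conj h h'))].
- intros th [[_ [h|h]] [h' h'']]; [contradiction|exact (N2 th (conj h h'))].
- intros th [[h _] [h' _]]. exact (N3 th (conj h h')).
- intros x y [Hx _] [Hy _]; auto.
- intros x y [Hx Ex] [Hy [Ey|Ey]]; [|auto].
  pose proof (D01 x Hx). unfold inTheta in *. lra.
Qed.

Definition dd_quantity (thl : R) (qe q : R -> R) (th : R) : R :=
  if Req_EM_T th thl then qe thl else Rmin (q th) (qe th).

Definition dd_share (thl : R) (r : R -> R) (th : R) : R :=
  if Req_EM_T th thl then 1 else r th.

Lemma dd_quantity_bottom thl qe q : dd_quantity thl qe q thl = qe thl.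
Proof. unfold dd_quantity. destruct (Req_EM_T thl thl); [reflexivity|contradiction]. Qed.

Lemma dd_share_bottom thl r : dd_share thl r thl = 1.
Proof. unfold dd_share. destruct (Req_EM_T thl thl); [reflexivity|contradiction]. Qed.

Lemma dd_quantity_other thl qe q th : th <> thl -> dd_quantity thl qe q th = Rmin (q th) (qe th).
Proof. intros E. unfold dd_quantity. destruct (Req_EM_T th thl); [contradiction|reflexivity]. Qed.

Lemma dd_share_other thl r th : th <> thl -> dd_share thl r th = r th.
Proof. intros E. unfold dd_share. destruct (Req_EM_T th thl); [contradiction|reflexivity]. Qed.

Lemma dd_quantity_DD thl thh qe q : DD thl thh qe (dd_quantity thl qe q).
Proof.
split; [|apply dd_quantity_bottom].
intros th _. destruct (Req_dec th thl) as [->|E].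
- rewrite dd_quantity_bottom. lra.
- rewrite dd_quantity_other by exact E. apply Rmin_r.
Qed.

Definition dd_flow (thl : R) (qe r q : R -> R) (th : R) : R :=
  dd_quantity thl qe q th * dd_share thl r th.

Section Improvement.

Context {thl thh c qbar qhat : R} {P qe r q u : R -> R}.
Hypothesis Hth : 0 < thl < thh.
Hypothesis P_cont : cont_on_Rplus P.
Hypothesis P_decr : forall x y, 0 <= x -> x < y -> y <= qbar -> P y < P x.
Hypothesis qe_inverse : forall th, inTheta thl thh th -> 0 <= qe th <= qbar /\ P (qe th) = th.
Hypothesis A2 : TS P c thh (qe thh) > 0.
Hypothesis qhat_floor : 0 < qhat <= qbar /\ V P qhat - qhat * P qhat = c.
Hypothesis M_floor : floor_randomized thl thh qbar qhat r q u.

Let Theta_bottom : inTheta thl thh thl.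
Proof. unfold inTheta; lra. Qed.

Let Theta_top : inTheta thl thh thh.
Proof. unfold inTheta; lra. Qed.

Lemma qe_nonincr a b : inTheta thl thh a -> inTheta thl thh b -> a <= b -> qe b <= qe a.
Proof.
intros Ha Hb Hab. destruct (Rle_lt_dec (qe b) (qe a)) as [h|h]; [exact h|].
destruct (qe_inverse a Ha), (qe_inverse b Hb).
assert (P (qe b) < P (qe a)) by (apply P_decr; lra). lra.
Qed.

(* [V q - q * P q] increases and equals [c] at [qhat], while
   [TS thh (qe thh) = V q - q * P q - c] at [q = qe thh]. *)
Lemma qhat_le_qe_top : qhat <= qe thh.
Proof.
destruct qhat_floor as [[Hq0 Hq1] Hqc].
destruct (qe_inverse thh Theta_top) as [Hb HP].
destruct (Rle_lt_dec qhat (qe thh)) as [h|h]; [exact h|]. exfalso.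
assert (Hpos : 0 < qe thh).
{ destruct (Rlt_dec 0 (qe thh)) as [h'|h']; [exact h'|].
  unfold TS in A2. destruct (Rlt_dec 0 (qe thh)); [contradiction|lra]. }
destruct (V_sub_strict_bounds P qbar P_cont P_decr (qe thh) qhat) as [W _]; try lra.
assert (P qhat < P (qe thh)) by (apply P_decr; lra).
unfold TS in A2. destruct (Rlt_dec 0 (qe thh)); [|lra]. nra.
Qed.

Lemma qhat_le_qe th : inTheta thl thh th -> qhat <= qe th.
Proof.
intros Hth'. pose proof (qe_nonincr th thh Hth' Theta_top (proj2 Hth')).
pose proof qhat_le_qe_top. lra.
Qed.

Lemma qe_pos th : inTheta thl thh th -> 0 < qe th.
Proof. intros Hth'. pose proof (qhat_le_qe th Hth'). destruct qhat_floor as [[] _]. lra. Qed.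

Lemma TS_qe_pos th : inTheta thl thh th -> 0 < TS P c th (qe th).
Proof.
intros Hth'.
assert (Htop : TS P c thh (qe thh) <= TS P c th (qe thh)).
{ pose proof (qe_pos thh Theta_top). unfold TS. destruct (Rlt_dec 0 (qe thh)); [|lra].
  unfold inTheta in Hth'. nra. }
destruct (Req_dec (qe thh) (qe th)) as [E|E]; [rewrite <- E; lra|].
destruct (qe_inverse th Hth'), (qe_inverse thh Theta_top).
pose proof (qe_pos th Hth'). pose proof (qe_pos thh Theta_top).
pose proof (TS_lt_TS_at_price P qbar P_cont P_decr th c (qe th) (qe thh)). lra.
Qed.

Lemma TS_lt_TS_qe th x : inTheta thl thh th -> 0 <= x <= qbar -> x <> qe th ->
  TS P c th x < TS P c th (qe th).
Proof.
intros Hth' Hx Hne. destruct (Req_dec x 0) as [->|Hx0].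
- pose proof (TS_qe_pos th Hth'). unfold TS at 1. destruct (Rlt_dec 0 0); lra.
- destruct (qe_inverse th Hth').
  apply (TS_lt_TS_at_price P qbar); auto; [pose proof (qe_pos th Hth')|]; lra.
Qed.

Lemma share_TS_lt_TS_qe th x s : inTheta thl thh th -> 0 <= x <= qbar -> x <> qe th ->
  0 <= s <= 1 -> s * TS P c th x < TS P c th (qe th).
Proof.
intros Hth' Hx Hne Hs.
pose proof (TS_lt_TS_qe th x Hth' Hx Hne). pose proof (TS_qe_pos th Hth').
destruct (Rle_lt_dec 0 (TS P c th x)); nra.
Qed.

Lemma share_above_qe th : inTheta thl thh th -> qe th < q th -> r th = 1.
Proof.
intros Hth' Hgt.
destruct (proj1 (floor_randomized_iff _ _ _ _ _ _ _) M_floor)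
  as (_ & _ & _ & _ & S1 & S01 & S0 & (_ & _ & _ & _ & _ & _ & Cov & _) & V1 & V01 & V0).
pose proof (qhat_le_qe th Hth'). pose proof (qe_pos th Hth').
destruct (Cov th Hth') as [h|[h|h]].
- apply (V1 th h).
- destruct (V01 th h). lra.
- destruct (V0 th h). lra.
Qed.

Let floor_mechanism : mechanism thl thh qbar r q u.
Proof. exact (proj1 M_floor). Qed.

Let floor_IC : IC thl thh r q u.
Proof. exact (proj1 (proj2 M_floor)). Qed.

Let floor_IR : Defs.IR thl thh u.
Proof. exact (proj1 (proj2 (proj2 M_floor))). Qed.

Lemma dd_mechanism (w : R -> R) :
  mechanism thl thh qbar (dd_share thl r) (dd_quantity thl qe q) w.
Proof.
intros th Hth'.
pose proof (qe_inverse th Hth'). pose proof (qe_pos th Hth').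
destruct (Req_dec th thl) as [->|E].
- rewrite dd_share_bottom, dd_quantity_bottom. repeat split; lra.
- rewrite dd_share_other, dd_quantity_other by exact E.
  destruct (floor_mechanism th Hth') as (Hr & Hq & Hiff).
  destruct (Rle_lt_dec (q th) (qe th)) as [h|h].
  + rewrite Rmin_left by exact h. auto.
  + rewrite Rmin_right by lra. rewrite (share_above_qe th Hth' h). repeat split; lra.
Qed.

Lemma dd_flow_other th : inTheta thl thh th -> th <> thl ->
  dd_flow thl qe r q th = Rmin (q th * r th) (qe th).
Proof.
intros Hth' E. unfold dd_flow. rewrite dd_share_other, dd_quantity_other by exact E.
destruct (floor_mechanism th Hth') as (Hr & Hq & _).
destruct (Rle_lt_dec (q th) (qe th)) as [h|h].
- rewrite !Rmin_left by nra. reflexivity.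
- rewrite (share_above_qe th Hth' h), !Rmult_1_r. reflexivity.
Qed.

Lemma dd_flow_le th : inTheta thl thh th -> th <> thl -> dd_flow thl qe r q th <= q th * r th.
Proof. intros Hth' E. rewrite dd_flow_other by assumption. apply Rmin_l. Qed.

Lemma dd_flow_ge0 th : inTheta thl thh th -> 0 <= dd_flow thl qe r q th.
Proof.
intros Hth'. pose proof (qe_pos th Hth'). destruct (Req_dec th thl) as [->|E].
- unfold dd_flow. rewrite dd_share_bottom, dd_quantity_bottom. lra.
- rewrite dd_flow_other by assumption.
  destruct (floor_mechanism th Hth') as (Hr & Hq & _).
  apply Rmin_glb; nra.
Qed.

Lemma dd_flow_nonincr a b : inTheta thl thh a -> inTheta thl thh b -> a <= b ->
  dd_flow thl qe r q b <= dd_flow thl qe r q a.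
Proof.
intros Ha Hb Hab. destruct (Req_dec b thl) as [Eb|Eb].
- assert (a = b) as -> by (unfold inTheta in Ha; lra). lra.
- rewrite (dd_flow_other b) by assumption.
  pose proof (qe_nonincr a b Ha Hb Hab).
  destruct (Req_dec a thl) as [->|Ea].
  + unfold dd_flow. rewrite dd_share_bottom, dd_quantity_bottom.
    pose proof (Rmin_r (q b * r b) (qe b)). lra.
  + rewrite dd_flow_other by assumption.
    pose proof (IC_flow_nonincr _ _ _ _ _ floor_IC a b Ha Hb Hab).
    apply Rmin_glb; [apply Rle_trans with (q b * r b)|apply Rle_trans with (qe b)];
      auto using Rmin_l, Rmin_r.
Qed.

Lemma dd_rent_le th : inTheta thl thh th -> rent thl thh (dd_flow thl qe r q) th <= u th.
Proof.
apply rent_minimal; [exact dd_flow_ge0|exact dd_flow_nonincr|exact floor_IR|].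
intros a p Ha Hp Hap.
assert (Ep : p <> thl) by (unfold inTheta in Ha; lra).
pose proof (floor_IC a p Ha Hp). pose proof (dd_flow_le p Hp Ep). nra.
Qed.

Lemma dd_floor_values S1 S01 S0 :
  ordered_partition thl thh S1 S01 S0 -> floor_values qhat r q S1 S01 S0 ->
  floor_values qhat (dd_share thl r) (dd_quantity thl qe q)
    (with_bottom thl thh S1) (without_bottom thl S01) (without_bottom thl S0).
Proof.
intros (_ & _ & _ & _ & D01 & D0 & _) (V1 & V01 & V0).
split; [|split].
- intros th [Hth' [->|h]].
  + rewrite dd_share_bottom, dd_quantity_bottom. pose proof (qhat_le_qe thl Theta_bottom). lra.
  + destruct (Req_dec th thl) as [->|E].
    * rewrite dd_share_bottom, dd_quantity_bottom. pose proof (qhat_le_qe thl Theta_bottom). lra.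
    * rewrite dd_share_other, dd_quantity_other by exact E.
      destruct (V1 th h). pose proof (qhat_le_qe th Hth').
      split; [apply Rle_ge, Rmin_glb|]; lra.
- intros th [h E]. rewrite dd_share_other, dd_quantity_other by exact E.
  destruct (V01 th h) as [-> Hr]. pose proof (qhat_le_qe th (D01 th h)).
  rewrite Rmin_left by lra. auto.
- intros th [h E]. rewrite dd_share_other, dd_quantity_other by exact E.
  destruct (V0 th h) as [-> Hr]. pose proof (qe_pos th (D0 th h)).
  rewrite Rmin_left by lra. auto.
Qed.

Lemma dd_floor_randomized :
  floor_randomized thl thh qbar qhat (dd_share thl r) (dd_quantity thl qe q)
    (rent thl thh (dd_flow thl qe r q)).
Proof.
destruct (proj1 (floor_randomized_iff _ _ _ _ _ _ _) M_floor)
  as (_ & _ & _ & _ & S1 & S01 & S0 & Hpart & Hval).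
apply floor_randomized_iff. split; [|split; [|split; [|split]]].
- apply dd_mechanism.
- intros a b Ha Hb.
  pose proof (rent_IC thl thh _ dd_flow_ge0 dd_flow_nonincr a b Ha Hb).
  unfold dd_flow in *. lra.
- intros a _. apply Rle_ge, (rent_ge0 thl thh _ dd_flow_ge0 dd_flow_nonincr).
- exact (rent_top thl thh _ dd_flow_ge0 dd_flow_nonincr).
- exists (with_bottom thl thh S1), (without_bottom thl S01), (without_bottom thl S0). split.
  + apply ordered_partition_move_bottom; [exact Hpart|].
    apply (floor_S1_below_S0 thl thh qhat r q u S1 S01 S0); auto; apply qhat_floor.
  + apply dd_floor_values; assumption.
Qed.

Lemma dd_gross_surplus_ge th : inTheta thl thh th ->
  r th * TS P c th (q th) <= dd_share thl r th * TS P c th (dd_quantity thl qe q th).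
Proof.
intros Hth'. destruct (floor_mechanism th Hth') as (Hr & Hq & _).
destruct (Req_dec th thl) as [->|E].
- rewrite dd_share_bottom, dd_quantity_bottom, Rmult_1_l.
  destruct (Req_dec (q thl) (qe thl)) as [->|Hne].
  + pose proof (TS_qe_pos thl Theta_bottom). nra.
  + left. apply share_TS_lt_TS_qe; auto.
- rewrite dd_share_other, dd_quantity_other by exact E.
  destruct (Rle_lt_dec (q th) (qe th)) as [h|h].
  + rewrite Rmin_left by exact h. lra.
  + rewrite Rmin_right by lra. rewrite (share_above_qe th Hth' h), !Rmult_1_l.
    left. apply TS_lt_TS_qe; auto; lra.
Qed.

Lemma dd_gross_surplus_gt th : inTheta thl thh th ->
  (th = thl /\ q th <> qe th) \/ qe th < q th ->
  r th * TS P c th (q th) < dd_share thl r th * TS P c th (dd_quantity thl qe q th).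
Proof.
intros Hth' Hcase. destruct (floor_mechanism th Hth') as (Hr & Hq & _).
destruct (Req_dec th thl) as [->|E].
- rewrite dd_share_bottom, dd_quantity_bottom, Rmult_1_l.
  apply share_TS_lt_TS_qe; auto. destruct Hcase as [[_ h]|h]; lra.
- destruct Hcase as [[h _]|h]; [contradiction|].
  rewrite dd_share_other, dd_quantity_other by exact E.
  rewrite Rmin_right by lra. rewrite (share_above_qe th Hth' h), !Rmult_1_l.
  apply TS_lt_TS_qe; auto; lra.
Qed.

End Improvement.

Theorem lemma4
  (thl thh c qbar : R) (P : R -> R) (qe : R -> R) (qhat alpha : R)
  (Hth : 0 < thl < thh) (Hc : 0 < c) (Hqbar : 0 < qbar)
  (HPcont : cont_on_Rplus P)
  (HPnn : forall x, 0 <= x -> 0 <= P x)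
  (HPdec : forall x y, 0 <= x -> x < y -> y <= qbar -> P y < P x)
  (HPqbar : P qbar = 0)
  (* qe = P^{-1} on Theta *)
  (Hqe : forall th, inTheta thl thh th -> 0 <= qe th <= qbar /\ P (qe th) = th)
  (* (A2) *)
  (HA2 : TS P c thh (qe thh) > 0)
  (* quantity floor *)
  (Hqhat : 0 < qhat <= qbar /\ V P qhat - qhat * P qhat = c)
  (Halpha : 0 <= alpha < 1)
  (r q u : R -> R)
  (HM : floor_randomized thl thh qbar qhat r q u) :
  exists rt qt ut : R -> R,
    floor_randomized thl thh qbar qhat rt qt ut /\
    DD thl thh qe qt /\
    (forall th, inTheta thl thh th -> thl < th -> qt th <= q th) /\
    (forall th, inTheta thl thh th -> ut th <= u th) /\
    (forall th, inTheta thl thh th ->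
       RS P c alpha rt qt ut th >= RS P c alpha r q u th) /\
    (forall th, inTheta thl thh th -> q th > qe th ->
       (thl < th -> qt th < q th) /\
       RS P c alpha rt qt ut th > RS P c alpha r q u th) /\
    (q thl <> qe thl ->
       RS P c alpha rt qt ut thl > RS P c alpha r q u thl).
Proof.
pose proof (dd_rent_le Hth HPcont HPdec Hqe HA2 Hqhat HM) as Hut.
pose proof (dd_gross_surplus_ge Hth HPcont HPdec Hqe HA2 Hqhat HM) as Hge.
pose proof (dd_gross_surplus_gt Hth HPcont HPdec Hqe HA2 Hqhat HM) as Hgt.
assert (Hbot : inTheta thl thh thl) by (unfold inTheta; lra).
exists (dd_share thl r), (dd_quantity thl qe q), (rent thl thh (dd_flow thl qe r q)).
unfold RS. split; [exact (dd_floor_randomized Hth HPcont HPdec Hqe HA2 Hqhat HM)|].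
split; [apply dd_quantity_DD|].
split; [intros th _ Hlt; rewrite dd_quantity_other by lra; apply Rmin_l|].
split; [exact Hut|].
split; [|split].
- intros th Hth'. specialize (Hut th Hth'). specialize (Hge th Hth'). nra.
- intros th Hth' Hq. split.
  + intros Hlt. rewrite dd_quantity_other by lra. rewrite Rmin_right; lra.
  + specialize (Hut th Hth'). specialize (Hgt th Hth' (or_intror Hq)). nra.
- intros Hne. specialize (Hut thl Hbot).
  specialize (Hgt thl Hbot (or_introl (conj eq_refl Hne))). nra.
Qed.
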